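(* Let $D$ be an $n\times n$ spherical Euclidean distance matrix (EDM), generated by points $p^1,\dots,p^n\in\mathbb{R}^r$ whose affine span is $\mathbb{R}^r$ (so $r$ is the embedding dimension of $D$) and which lie on a hypersphere in $\mathbb{R}^r$ of radius $\rho$. Then \[ \rho^2 = \frac{e^T D e}{2n^2} + \frac{e^T D\, (\mathcal{T}(D))^{\dagger} D e}{4n^2}, \] where $e\in\mathbb{R}^n$ is the all-ones vector, $\mathcal{T}(D) = -\tfrac12 JDJ$ with $J = I_n - \tfrac1n ee^T$, and $A^\dagger$ denotes the Moore–Penrose inverse of $A$.
   Context: An $n\times n$ matrix $D=(d_{ij})$ is a Euclidean distance matrix (EDM) if there exist points $p^1,\dots,p^n$ in some Euclidean space with $d_{ij}=\|p^i-p^j\|^2$ for all $i,j$; the dimension of the affine span of these points is the embedding dimension of $D$. An EDM is spherical if the points generating it lie on a hypersphere. *)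

From HB Require Import structures.
From mathcomp Require Import all_boot all_order all_algebra.
Set Implicit Arguments. Unset Strict Implicit. Unset Printing Implicit Defensive.
Import Order.TTheory GRing.Theory Num.Theory.
Local Open Scope ring_scope.

Section Defs.
Variable R : realFieldType.

Definition sqnorm (r : nat) (v : 'rV[R]_r) : R := \sum_(k < r) v 0 k ^+ 2.

Definition edm (n r : nat) (p : 'I_n -> 'rV[R]_r) : 'M[R]_n :=
  \matrix_(i, j) sqnorm (p i - p j).

(* affine span of the points is all of R^r: the linear span of the
   differences p_i - p_j is the whole space *)
Definition affine_span_full (n r : nat) (p : 'I_n -> 'rV[R]_r) : bool :=
  ((\sum_(i < n) \sum_(j < n) <<p i - p j>>)%MS == 1%:M)%MS.

Definition on_sphere (n r : nat) (p : 'I_n -> 'rV[R]_r) (rho : R) : Prop :=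
  exists c : 'rV[R]_r, forall i, sqnorm (p i - c) = rho ^+ 2.

Definition ones (n : nat) : 'cV[R]_n := const_mx 1.

Definition Jproj (n : nat) : 'M[R]_n :=
  1%:M - (n%:R)^-1 *: (ones n *m (ones n)^T).

Definition Tmap (n : nat) (D : 'M[R]_n) : 'M[R]_n :=
  - (2^-1) *: (Jproj n *m D *m Jproj n).

Definition is_MP_inverse (m k : nat) (A : 'M[R]_(m, k)) (X : 'M[R]_(k, m)) : Prop :=
  [/\ A *m X *m A = A, X *m A *m X = X,
      (A *m X)^T = A *m X & (X *m A)^T = X *m A].

End Defs.

(* With q_i = p_i - c on the sphere, D = 2 rho^2 e e^T - 2 Q Q^T, so T(D) = B B^T for
   B = J Q, whose rows p_i - p_bar span R^r. Hence X = T(D)^+ satisfies B^T X B = I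
   and X e = 0. Writing s = Q^T e, one has Q = B + e s^T / n, so
   e^T D e = 2 rho^2 n^2 - 2 |s|^2 and e^T D X D e = 4 |s|^2: the |s|^2 terms cancel. *)
From HB Require Import structures.
From mathcomp Require Import all_boot all_order all_algebra.
From mathcomp Require Import ring.
Set Implicit Arguments. Unset Strict Implicit. Unset Printing Implicit Defensive.
Import Order.TTheory GRing.Theory Num.Theory.
Local Open Scope ring_scope.

Section EDM.
Variable R : realFieldType.

Lemma sqnormB r (u v : 'rV[R]_r) :
  sqnorm (u - v) = sqnorm u + sqnorm v - 2 * (u *m v^T) 0 0.
Proof.
rewrite /sqnorm !mxE mulr_sumr -sumrN -!big_split /=.
by apply: eq_bigr => k _; rewrite !mxE; ring.
Qed.

Definition config_mx n r (p : 'I_n -> 'rV[R]_r) (c : 'rV[R]_r) : 'M[R]_(n, r) :=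
  \matrix_i (p i - c).

Lemma edm_on_sphere n r (p : 'I_n -> 'rV[R]_r) c k :
  (forall i, sqnorm (p i - c) = k) ->
  edm p = (2 * k) *: (ones R n *m (ones R n)^T)
          - 2 *: (config_mx p c *m (config_mx p c)^T).
Proof.
move=> hk; apply/matrixP => i j; rewrite !mxE big_ord1 !mxE mulr1.
have -> : p i - p j = (p i - c) - (p j - c) by rewrite opprB addrA subrK.
rewrite sqnormB !hk mxE; congr (_ - _ * _); first ring.
by apply: eq_bigr => l _; rewrite !mxE.
Qed.

Lemma tr_ones_mul_ones n : (ones R n)^T *m ones R n = n%:R%:M.
Proof.
apply/matrixP => i j; rewrite !mxE !ord1 eqxx mulr1n.
under eq_bigr do rewrite !mxE mulr1.
by rewrite sumr_const card_ord.
Qed.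

Lemma Jproj_ones n : (0 < n)%N -> Jproj R n *m ones R n = 0.
Proof.
move=> n_gt0; rewrite mulmxBl mul1mx -scalemxAl -mulmxA tr_ones_mul_ones.
by rewrite mul_mx_scalar scalerA mulVf ?scale1r ?subrr // pnatr_eq0 -lt0n.
Qed.

Lemma tr_Jproj n : (Jproj R n)^T = Jproj R n.
Proof. by rewrite linearB /= trmx1 linearZ /= trmx_mul trmxK. Qed.

Lemma Tmap_sphere n r a (Q : 'M[R]_(n, r)) : (0 < n)%N ->
  Tmap (a *: (ones R n *m (ones R n)^T) - 2 *: (Q *m Q^T))
  = (Jproj R n *m Q) *m (Jproj R n *m Q)^T.
Proof.
move=> n_gt0; rewrite /Tmap.
move: (Jproj R n) (Jproj_ones n_gt0) (tr_Jproj n) => J Je trJ.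
rewrite mulmxBr mulmxBl -!scalemxAr -!scalemxAl !mulmxA Je !mul0mx scaler0.
rewrite sub0r trmx_mul trJ !mulmxA.
by rewrite scalerN scaleNr opprK scalerA mulVf ?scale1r // pnatr_eq0.
Qed.

Lemma row_Jproj_mulB n m (M : 'M[R]_(n, m)) i j :
  row i (Jproj R n *m M) - row j (Jproj R n *m M) = row i M - row j M.
Proof.
rewrite mulmxBl mul1mx !linearB /= -!scalemxAl !linearZ /= -!mulmxA !row_mul.
by rewrite !row_const opprK scalerN addrACA addNr addr0.
Qed.

Lemma row_full_affine_span n r m (p : 'I_n -> 'rV[R]_r) (B : 'M[R]_(m, r)) :
  (forall i j, (p i - p j <= B)%MS) -> affine_span_full p -> row_full B.
Proof.
move=> sub_pB /andP[_ full_span]; rewrite -sub1mx (submx_trans full_span) //.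
apply/sumsmx_subP => i _; apply/sumsmx_subP => j _.
by rewrite genmxE sub_pB.
Qed.

End EDM.

Section MoorePenrose.
Variable R : realFieldType.

Lemma MP_inverse_mulmx_eq0 m k (A : 'M[R]_(m, k)) X (v : 'cV_m) :
  is_MP_inverse A X -> A^T *m v = 0 -> X *m v = 0.
Proof.
move=> [_ XAX AX_sym _] Av0.
have -> : X = X *m X^T *m A^T by rewrite -mulmxA -trmx_mul AX_sym mulmxA XAX.
by rewrite -mulmxA Av0 mulmx0.
Qed.

Lemma MP_inverse_trmx_mulmx_eq0 m k (A : 'M[R]_(m, k)) X (v : 'cV_k) :
  is_MP_inverse A X -> A *m v = 0 -> v^T *m X = 0.
Proof.
move=> [_ XAX _ XA_sym] Av0.
have -> : X = A^T *m X^T *m X by rewrite -trmx_mul XA_sym XAX.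
by rewrite !mulmxA -trmx_mul Av0 trmx0 !mul0mx.
Qed.

Lemma MP_inverse_gram m k (B : 'M[R]_(m, k)) X :
  row_full B -> is_MP_inverse (B *m B^T) X -> B^T *m X *m B = 1%:M.
Proof.
move=> /row_fullP[C CB] [AXA _ _ _].
have := congr1 (fun Y => C *m Y *m C^T) AXA.
by rewrite /= !mulmxA CB mul1mx -!mulmxA -trmx_mul CB trmx1 !mulmx1.
Qed.

End MoorePenrose.

Section SphereQuadraticForms.
Variables (R : realFieldType) (n r : nat) (N a : R).
Variables (e : 'cV[R]_n) (B Q : 'M[R]_(n, r)) (s : 'cV[R]_r) (D X : 'M[R]_n).
Hypotheses (N_neq0 : N != 0) (ete : e^T *m e = N%:M) (eB : e^T *m B = 0).
Hypothesis Q_def : Q = B + N^-1 *: (e *m s^T).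
Hypothesis D_def : D = a *: (e *m e^T) - 2 *: (Q *m Q^T).
Let ss := (s^T *m s) 0 0.

Lemma mulmx_D_ones : D *m e = (a * N - 2 * (ss / N)) *: e - 2 *: (B *m s).
Proof.
have Qt_e : Q^T *m e = s.
  have Bt_e : B^T *m e = 0 by rewrite -[e]trmxK -trmx_mul eB trmx0.
  rewrite Q_def linearD /= linearZ /= mulmxDl Bt_e add0r -scalemxAl.
  by rewrite (trmx_mul e) trmxK -mulmxA ete mul_mx_scalar scalerA mulVf ?scale1r.
have Q_s : Q *m s = B *m s + (ss / N) *: e.
  rewrite Q_def mulmxDl -scalemxAl -mulmxA [s^T *m s]mx11_scalar.
  by rewrite mul_mx_scalar scalerA mulrC.
rewrite D_def mulmxBl -!scalemxAl -!mulmxA ete Qt_e Q_s mul_mx_scalar.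
move: (B *m s) => v; apply/matrixP => i j; rewrite !mxE; ring.
Qed.

Lemma quad_D_ones : e^T *m D *m e = (a * N ^+ 2 - 2 * ss)%:M.
Proof.
rewrite -mulmxA mulmx_D_ones mulmxBr -!scalemxAr mulmxA eB mul0mx scaler0 subr0 ete.
by apply/matrixP => i j; rewrite !mxE; field.
Qed.

Hypotheses (Xe : X *m e = 0) (eX : e^T *m X = 0) (BXB : B^T *m X *m B = 1%:M).

Lemma quad_DXD_ones : e^T *m D *m X *m D *m e = (4 * ss)%:M.
Proof.
have D_sym : D^T = D by rewrite D_def linearB /= !linearZ /= !trmx_mul !trmxK.
have -> : e^T *m D *m X *m D *m e = (D *m e)^T *m X *m (D *m e).
  by rewrite trmx_mul D_sym !mulmxA.
rewrite mulmx_D_ones.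
move: (a * N - 2 * (ss / N)) => c.
have vT : (c *: e - 2 *: (B *m s))^T = c *: e^T - 2 *: (s^T *m B^T).
  by rewrite linearB /= !linearZ /=; congr (_ + _ *: - _); exact: trmx_mul.
rewrite vT mulmxBl -!scalemxAl eX scaler0 sub0r mulNmx mulmxBr -!scalemxAr.
rewrite -!scalemxAl -[s^T *m B^T *m X *m e]mulmxA Xe mulmx0 !scaler0 sub0r opprK.
have -> : s^T *m B^T *m X *m (B *m s) = s^T *m (B^T *m X *m B) *m s.
  by rewrite !mulmxA.
rewrite BXB mulmx1 [s^T *m s]mx11_scalar -/ss.
by apply/matrixP => i j; rewrite !mxE; ring.
Qed.

Lemma quad_forms_sum :
  (e^T *m D *m e) 0 0 / (2 * N ^+ 2) + (e^T *m D *m X *m D *m e) 0 0 / (4 * N ^+ 2)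
  = a / 2.
Proof. by rewrite quad_D_ones quad_DXD_ones !mxE eqxx /=; field. Qed.

End SphereQuadraticForms.

Theorem lemma4 (R : realFieldType) (n r : nat) (p : 'I_n -> 'rV[R]_r) (rho : R)
  (X : 'M[R]_n) :
  (0 < n)%N ->
  affine_span_full p ->
  0 <= rho ->
  on_sphere p rho ->
  is_MP_inverse (Tmap (edm p)) X ->
  rho ^+ 2 =
    ((ones R n)^T *m edm p *m ones R n) 0 0 / (2 * (n%:R) ^+ 2)
  + ((ones R n)^T *m edm p *m X *m edm p *m ones R n) 0 0 / (4 * (n%:R) ^+ 2).
Proof.
move=> n_gt0 span_full _ [c on_c] MP_X.
set e := ones R n; set Q := config_mx p c; set B := Jproj R n *m Q.
have D_def := edm_on_sphere on_c.
have T_gram : Tmap (edm p) = B *m B^T by rewrite D_def Tmap_sphere.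
rewrite T_gram in MP_X.
have B_full : row_full B.
  apply: row_full_affine_span span_full => i j.
  have -> : p i - p j = row i B - row j B.
    by rewrite row_Jproj_mulB !rowK opprB addrA subrK.
  by rewrite !rowE -mulmxBl submxMl.
have eB : e^T *m B = 0.
  by rewrite mulmxA -tr_Jproj -trmx_mul Jproj_ones // trmx0 mul0mx.
have BBt_e : B *m B^T *m e = 0 by rewrite -mulmxA -[e]trmxK -trmx_mul eB trmx0 mulmx0.
have Xe : X *m e = 0.
  by apply: (MP_inverse_mulmx_eq0 MP_X); rewrite trmx_mul trmxK.
have eX : e^T *m X = 0 := MP_inverse_trmx_mulmx_eq0 MP_X BBt_e.
have Q_def : Q = B + n%:R^-1 *: (e *m (Q^T *m e)^T).
  by rewrite /B mulmxBl mul1mx -scalemxAl trmx_mul trmxK mulmxA subrK.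
have n_neq0 : n%:R != 0 :> R by rewrite pnatr_eq0 -lt0n.
rewrite (quad_forms_sum n_neq0 (tr_ones_mul_ones R n) eB Q_def D_def Xe eX
  (MP_inverse_gram B_full MP_X)).
by rewrite [2 * _]mulrC mulfK // pnatr_eq0.
Qed.
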